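(* Let $I$ be a monomial ideal of $R=K[x_1,\ldots,x_d]$ ($K$ a field) and let $r\in\mathbb{R}$, $r\ge0$. Let $\mathcal{S}(I,r)$ denote the set of lattice points in $\operatorname{hype}(I,r)$. Then (1) $\lceil r\cdot\operatorname{np}(I)\rceil:=\{(\lceil p_1\rceil,\ldots,\lceil p_d\rceil)\mid \mathbf{p}\in r\cdot\operatorname{np}(I)\}\subseteq\mathcal{S}(I,r)$; (2) $\overline{I^r}=(\{\mathbf{x}^{\mathbf{a}}\mid \mathbf{a}\in r\cdot NP(I)\cap\operatorname{hype}(I,r)\cap\mathbb{N}^d\})$.
   Context: $\mathbb{N}$ denotes the non-negative integers and $\mathbf{x}^{\mathbf{a}}=x_1^{a_1}\cdots x_d^{a_d}$. $G(I)$ is the minimal monomial generating set of $I$. $NP(I)$ is the convex hull in $\mathbb{R}^d$ of $\{\mathbf{a}\in\mathbb{N}^d\mid \mathbf{x}^{\mathbf{a}}\in I\}$ and $\operatorname{np}(I)$ is the convex hull of $\{\mathbf{a}\mid \mathbf{x}^{\mathbf{a}}\in G(I)\}$. For real $r\ge0$, $\overline{I^r}=(\{\mathbf{x}^{\mathbf{a}}\mid \mathbf{a}\in r\cdot NP(I)\cap\mathbb{N}^d\})$. Let $\mathcal{V}(I,r)=\{(\lceil ra_1\rceil,\ldots,\lceil ra_d\rceil)\mid \mathbf{x}^{\mathbf{a}}\in G(I)\}$, and for $1\le i\le d$ let $\min(\mathcal{V},i)=\min_{\alpha\in\mathcal{V}(I,r)}\alpha_i$ and $\max(\mathcal{V},i)=\max_{\alpha\in\mathcal{V}(I,r)}\alpha_i$.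 The hyperrectangle is $\operatorname{hype}(I,r)=\prod_{i=1}^d[\min(\mathcal{V},i),\max(\mathcal{V},i)]\subseteq\mathbb{R}^d$. *)

From mathcomp Require Import all_boot all_order all_algebra.
From mathcomp Require Import mpoly.
From mathcomp Require Import reals.
Set Implicit Arguments. Unset Strict Implicit. Unset Printing Implicit Defensive.
Import Order.TTheory GRing.Theory Num.Theory.
Local Open Scope ring_scope.

Section Defs.
Variables (K : fieldType) (d : nat) (R : realType).

Definition ideal_span (S : {mpoly K[d]} -> Prop) : {mpoly K[d]} -> Prop :=
  fun f => exists (n : nat) (c s : 'I_n -> {mpoly K[d]}),
    (forall i, S (s i)) /\ f = \sum_(i < n) c i * s i.

Definition monomial_span (A : 'X_{1..d} -> Prop) : {mpoly K[d]} -> Prop :=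
  ideal_span (fun p => exists a, A a /\ p = 'X_[a]).

Definition is_monomial_ideal (I : {mpoly K[d]} -> Prop) : Prop :=
  exists A : 'X_{1..d} -> Prop, forall f, I f <-> monomial_span A f.

Definition mingens (I : {mpoly K[d]} -> Prop) (a : 'X_{1..d}) : Prop :=
  I 'X_[a] /\
  forall b : 'X_{1..d}, I 'X_[b] -> (forall j, (b j <= a j)%N) -> b = a.

Definition pt := 'I_d -> R.

Definition embed (a : 'X_{1..d}) : pt := fun j => ((a j)%:R : R).

Definition conv (S : pt -> Prop) : pt -> Prop :=
  fun p => exists (n : nat) (l : 'I_n -> R) (v : 'I_n -> pt),
    (forall i, 0 <= l i) /\ \sum_(i < n) l i = 1 /\ (forall i, S (v i)) /\
    forall j, p j = \sum_(i < n) l i * v i j.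

Definition scale (r : R) (S : pt -> Prop) : pt -> Prop :=
  fun p => exists2 q, S q & forall j, p j = r * q j.

Definition NP (I : {mpoly K[d]} -> Prop) : pt -> Prop :=
  conv (fun p => exists a, I 'X_[a] /\ p = embed a).
Definition np (I : {mpoly K[d]} -> Prop) : pt -> Prop :=
  conv (fun p => exists a, mingens I a /\ p = embed a).

(* integral closure of I^r : generated by x^a with a in r NP(I) cap N^d *)
Definition intclos_pow (I : {mpoly K[d]} -> Prop) (r : R) : {mpoly K[d]} -> Prop :=
  monomial_span (fun a => scale r (NP I) (embed a)).

Definition Vset (I : {mpoly K[d]} -> Prop) (r : R) (alpha : 'I_d -> int) : Prop :=
  exists2 a, mingens I a & forall j, alpha j = Num.ceil (r * (a j)%:R).

(* hype(I,r) = prod_i [min(V,i), max(V,i)] : a point x lies in it iff for each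
   i, some alpha in V has alpha_i <= x_i and some beta in V has x_i <= beta_i
   (V is finite, so this is exactly min(V,i) <= x_i <= max(V,i)). *)
Definition hype (I : {mpoly K[d]} -> Prop) (r : R) (x : pt) : Prop :=
  forall i : 'I_d,
    (exists2 alpha, Vset I r alpha & (alpha i)%:~R <= x i) /\
    (exists2 beta, Vset I r beta & x i <= (beta i)%:~R).

Definition Sset (I : {mpoly K[d]} -> Prop) (r : R) (z : 'I_d -> int) : Prop :=
  hype I r (fun j => (z j)%:~R).

End Defs.

(* Write a point of r np(I) as r q with q = sum_k l_k g_k a convex combination of
   minimal generators.  Each coordinate q_i lies between min_k g_k,i and max_k g_k,i,
   so ceil (r q_i) lies between the i-th coordinates of two points of V(I,r); this is (1).
   For (2), NP(I) = np(I) + R_{>=0}^d for a monomial ideal.  Given a = r p with p in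
   NP(I), choose q in np(I) with q <= p and put b = ceil (r q): then b is in hype(I,r)
   by (1), r q <= b <= a, so b is in r NP(I) by upward closure, and x^b divides x^a. *)

From mathcomp Require Import all_boot all_order all_algebra.
From mathcomp Require Import mpoly.
From mathcomp Require Import reals.
From mathcomp Require Import ring.
From Stdlib Require Import Classical ClassicalEpsilon.
Set Implicit Arguments. Unset Strict Implicit. Unset Printing Implicit Defensive.
Import Order.TTheory GRing.Theory Num.Theory.
Local Open Scope ring_scope.

Arguments choice {A B R}.

Section ConvexHull.
Variables (d : nat) (R : realType) (S : pt d R -> Prop).

(* [conv S] is [poscomb 1] by conversion; arbitrary total weights make the
   hull lemmas provable by induction. *)
Definition poscomb (s : R) (p : pt d R) : Prop :=
  exists (n : nat) (l : 'I_n -> R) (v : 'I_n -> pt d R),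
    (forall i, 0 <= l i) /\ \sum_(i < n) l i = s /\ (forall i, S (v i)) /\
    forall j, p j = \sum_(i < n) l i * v i j.

Lemma poscomb_eq s p q : poscomb s p -> p =1 q -> poscomb s q.
Proof.
move=> [n [l [v [l_ge0 [sum_l [Sv Ep]]]]]] Epq.
by exists n, l, v; split; [|split; [|split]] => // j; rewrite -Epq.
Qed.

Lemma poscomb0 : poscomb 0 (fun _ => 0).
Proof.
exists 0%N, (fun _ => 0), (fun _ _ => 0).
by split; [|split; [|split]] => [[]//||[]//|j]; rewrite big_ord0.
Qed.

Lemma poscomb_pt v : S v -> poscomb 1 v.
Proof.
move=> Sv; exists 1%N, (fun _ => 1), (fun _ => v).
by split; [|split; [|split]] => [_||//|j]; rewrite ?ler01 ?big_ord1 ?mul1r.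
Qed.

Lemma poscombZ t s p : 0 <= t -> poscomb s p -> poscomb (t * s) (fun j => t * p j).
Proof.
move=> t_ge0 [n [l [v [l_ge0 [<- [Sv Ep]]]]]].
exists n, (fun i => t * l i), v; split; [|split; [|split]] => [i||//|j].
- exact: mulr_ge0.
- by rewrite mulr_sumr.
- by rewrite Ep mulr_sumr; apply: eq_bigr => i _; rewrite mulrA.
Qed.

Lemma poscombD s1 s2 p1 p2 :
  poscomb s1 p1 -> poscomb s2 p2 -> poscomb (s1 + s2) (fun j => p1 j + p2 j).
Proof.
move=> [n1 [l1 [v1 [l1_ge0 [<- [Sv1 Ep1]]]]]] [n2 [l2 [v2 [l2_ge0 [<- [Sv2 Ep2]]]]]].
pose glue T (f1 : 'I_n1 -> T) (f2 : 'I_n2 -> T) i :=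
  match split i with inl i1 => f1 i1 | inr i2 => f2 i2 end.
have glue_sum (f1 : 'I_n1 -> R) f2 :
    \sum_i glue _ f1 f2 i = \sum_i f1 i + \sum_i f2 i.
  rewrite big_split_ord; congr (_ + _); apply: eq_bigr => i _.
  - by rewrite /glue (unsplitK (inl i)).
  - by rewrite /glue (unsplitK (inr i)).
exists (n1 + n2)%N, (glue _ l1 l2), (glue _ v1 v2).
split; [|split; [|split]] => [i||i|j].
- by rewrite /glue; case: split.
- exact: glue_sum.
- by rewrite /glue; case: split.
- rewrite Ep1 Ep2 -glue_sum; apply: eq_bigr => i _.
  by rewrite /glue; case: split.
Qed.

Lemma poscomb_sum n (l s : 'I_n -> R) (w : 'I_n -> pt d R) :
  (forall k, 0 <= l k) -> (forall k, poscomb (s k) (w k)) ->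
  poscomb (\sum_(k < n) l k * s k) (fun j => \sum_(k < n) l k * w k j).
Proof.
elim: n l s w => [|n IH] l s w l_ge0 w_comb.
  by rewrite big_ord0; apply: poscomb_eq poscomb0 _ => j; rewrite big_ord0.
rewrite big_ord_recr; apply: poscomb_eq; last by move=> j; rewrite big_ord_recr.
exact: poscombD (IH _ _ _ (fun k => l_ge0 _) (fun k => w_comb _))
               (poscombZ (l_ge0 ord_max) (w_comb ord_max)).
Qed.

Lemma conv_eq p q : conv S p -> p =1 q -> conv S q.
Proof. exact: poscomb_eq. Qed.

Lemma conv_pt v : S v -> conv S v.
Proof. exact: poscomb_pt. Qed.

Lemma conv_comb n (l : 'I_n -> R) (w : 'I_n -> pt d R) :
  (forall k, 0 <= l k) -> \sum_(k < n) l k = 1 -> (forall k, conv S (w k)) ->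
  conv S (fun j => \sum_(k < n) l k * w k j).
Proof.
move=> l_ge0 sum_l w_conv; have := poscomb_sum l_ge0 w_conv.
by under eq_bigr do rewrite mulr1; rewrite sum_l.
Qed.

Lemma conv_convex t p q : 0 <= t <= 1 -> conv S p -> conv S q ->
  conv S (fun j => (1 - t) * p j + t * q j).
Proof.
move=> /andP[t_ge0 t_le1] Sp Sq.
have t'_ge0 : 0 <= 1 - t by rewrite subr_ge0.
have := poscombD (poscombZ t'_ge0 Sp) (poscombZ t_ge0 Sq).
by rewrite !mulr1 subrK.
Qed.

Lemma conv_translate c p : (forall v, S v -> conv S (fun j => v j + c j)) ->
  conv S p -> conv S (fun j => p j + c j).
Proof.
move=> S_translate [n [l [v [l_ge0 [sum_l [Sv Ep]]]]]].
apply: conv_eq (conv_comb l_ge0 sum_l (fun k => S_translate _ (Sv k))) _ => j.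
rewrite Ep /=; under eq_bigr do rewrite mulrDr.
by rewrite big_split -mulr_suml sum_l mul1r.
Qed.

Lemma conv_sub (T : pt d R -> Prop) p : (forall v, S v -> T v) -> conv S p -> conv T p.
Proof.
move=> ST [n [l [v [l_ge0 [sum_l [Sv Ep]]]]]].
by exists n, l, v; split; [|split; [|split]] => // i; apply: ST.
Qed.

Lemma conv_ge0 j p : (forall v, S v -> 0 <= v j) -> conv S p -> 0 <= p j.
Proof.
move=> S_ge0 [n [l [v [l_ge0 [_ [Sv ->]]]]]].
by apply: sumr_ge0 => k _; rewrite mulr_ge0 ?l_ge0 ?S_ge0.
Qed.

End ConvexHull.

Section ConvexCombination.
Variables (R : realDomainType) (n : nat) (l : 'I_n -> R).
Hypotheses (l_ge0 : forall k, 0 <= l k) (sum_l : \sum_(k < n) l k = 1).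

Lemma exists_le_convex_comb (x : 'I_n -> R) :
  exists k, x k <= \sum_(k < n) l k * x k.
Proof.
case: n l x l_ge0 sum_l => [|m] l' x l'_ge0 sum_l'.
  by move: sum_l'; rewrite big_ord0 => /eqP; rewrite eq_sym oner_eq0.
have [k _ min_k] := @arg_minP _ _ _ ord0 xpredT x isT.
exists k; rewrite -[X in X <= _]mul1r -sum_l' mulr_suml.
by apply: ler_sum => i _; apply: ler_wpM2l; [exact: l'_ge0 | exact: min_k].
Qed.

Lemma exists_ge_convex_comb (x : 'I_n -> R) :
  exists k, \sum_(k < n) l k * x k <= x k.
Proof.
have [k] := exists_le_convex_comb (fun k => - x k).
by under eq_bigr do rewrite mulrN; rewrite sumrN lerN2; exists k.
Qed.

End ConvexCombination.

Section MonomialIdeal.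
Variables (K : fieldType) (d : nat).
Implicit Types (A B : 'X_{1..d} -> Prop) (I : {mpoly K[d]} -> Prop) (f : {mpoly K[d]}).

Lemma monomial_span_mulX A u f : monomial_span A f -> monomial_span A ('X_[u] * f).
Proof.
move=> [n [c [s [As ->]]]]; exists n, (fun i => 'X_[u] * c i), s; split => //.
by rewrite mulr_sumr; apply: eq_bigr => i _; rewrite mulrA.
Qed.

Lemma monomial_ideal_mulX I e u : is_monomial_ideal I -> I 'X_[e] -> I 'X_[e + u].
Proof.
by move=> [A IA] /IA Ie; apply/IA; rewrite mpolyXD mulrC; apply: monomial_span_mulX.
Qed.

Lemma monomial_span_mono A B f :
  (forall a, A a -> B a) -> monomial_span A f -> monomial_span B f.
Proof.
move=> AB [n [c [s [As ->]]]]; exists n, c, s; split => // i.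
by have [a [Aa ->]] := As i; exists a; split => //; apply: AB.
Qed.

Lemma monomial_span_refine A B f :
  (forall a, A a -> exists b u, B b /\ a = (b + u)%MM) ->
  monomial_span A f -> monomial_span B f.
Proof.
move=> AB [n [c [s [As ->]]]].
have [a Ea] := choice As.
have [b Eb] := choice (fun i => AB _ (proj1 (Ea i))).
have [u Eu] := choice Eb.
exists n, (fun i => c i * 'X_[u i]), (fun i => 'X_[b i]); split.
  by move=> i; exists (b i); split => //; case: (Eu i).
apply: eq_bigr => i _; rewrite (proj2 (Ea i)) (proj2 (Eu i)) mpolyXD.
by rewrite -mulrA [_ * 'X_[_]]mulrC.
Qed.

Lemma mingens_below I e : I 'X_[e] -> exists g, mingens I g /\ (g <= e)%MM.
Proof.
elim/(ltmwf (n := d)): e => e IH Ie.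
case: (classic (mingens I e)) => [min_e | not_min_e].
  by exists e; split => //; apply: lepm_refl.
have [b [Ib le_be ne_be]] : exists b, [/\ I 'X_[b], (b <= e)%MM & b <> e].
  apply: NNPP => no_b; apply: not_min_e; split => // b Ib /mnm_lepP le_be.
  by apply: NNPP => ne_be; apply: no_b; exists b.
have lt_be : (b < e)%O by rewrite lt_neqAle lem_leo // andbT; apply/eqP.
have [g [mg le_gb]] := IH b lt_be Ib.
by exists g; split => //; apply: lepm_trans le_gb le_be.
Qed.

End MonomialIdeal.

Section NewtonPolyhedron.
Variables (K : fieldType) (d : nat) (R : realType) (I : {mpoly K[d]} -> Prop).

Lemma NP_exponent a : I 'X_[a] -> NP I (embed R a).
Proof. by move=> Ia; apply: conv_pt; exists a. Qed.

Lemma NP_above_np (p : pt d R) : NP I p -> exists2 q, np I q & forall j, q j <= p j.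
Proof.
move=> [n [l [v [l_ge0 [sum_l [Iv Ep]]]]]].
have [e Ee] := choice Iv.
have [g Eg] := choice (fun k => mingens_below (proj1 (Ee k))).
exists (fun j => \sum_(k < n) l k * embed R (g k) j).
  by apply: conv_comb l_ge0 sum_l _ => k; apply: conv_pt; exists (g k); case: (Eg k).
move=> j; rewrite Ep; apply: ler_sum => k _; rewrite (proj2 (Ee k)).
apply: ler_wpM2l; first exact: l_ge0.
by rewrite ler_nat; apply: (mnm_lepP (proj2 (Eg k))).
Qed.

Lemma np_ge0 (q : pt d R) j : np I q -> 0 <= q j.
Proof. by apply: conv_ge0 => _ [a [_ ->]]; apply: ler0n. Qed.

Lemma Sset_ceil_scale_np (r : R) (p : pt d R) : 0 <= r -> scale r (np I) p ->
  Sset I r (fun j => Num.ceil (p j)).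
Proof.
move=> r_ge0 [q [n [l [v [l_ge0 [sum_l [Gv Eq]]]]]] Ep] i.
have [g Eg] := choice Gv.
have Vg k : Vset I r (fun j => Num.ceil (r * (g k j)%:R)).
  by exists (g k) => //; case: (Eg k).
have Ep_i : p i = r * \sum_(k < n) l k * (g k i)%:R.
  by rewrite Ep Eq; congr (_ * _); apply: eq_bigr => k _; rewrite (proj2 (Eg k)).
split.
- have [k le_k] := exists_le_convex_comb l_ge0 sum_l (fun k => (g k i)%:R).
  apply: ex_intro2 (Vg k) _; rewrite ler_int; apply: le_ceil.
  by rewrite Ep_i; apply: ler_wpM2l.
- have [k ge_k] := exists_ge_convex_comb l_ge0 sum_l (fun k => (g k i)%:R).
  apply: ex_intro2 (Vg k) _; rewrite ler_int; apply: le_ceil.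
  by rewrite Ep_i; apply: ler_wpM2l.
Qed.

Lemma np_sub_NP (q : pt d R) : np I q -> NP I q.
Proof. by apply: conv_sub => _ [a [[Ia _] ->]]; exists a. Qed.

Section UpwardClosed.
Hypothesis I_up : forall e u : 'X_{1..d}, I 'X_[e] -> I 'X_[e + u].

Lemma NP_vertex_addr (c : pt d R) e : (forall j, 0 <= c j) -> I 'X_[e] ->
  NP I (fun j => embed R e j + c j).
Proof.
move=> c_ge0.
pose c_ m (j : 'I_d) := if (j < m)%N then c j else 0.
suff NP_vertex_addr_prefix m : (m <= d)%N -> forall e, I 'X_[e] ->
    NP I (fun j => embed R e j + c_ m j).
  by move=> Ie; apply: conv_eq (NP_vertex_addr_prefix d (leqnn d) e Ie) _ => j;
    rewrite /c_ ltn_ord.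
elim: m => [_ | m IH lt_md] {}e Ie.
  by apply: conv_eq (NP_exponent Ie) _ => j; rewrite /c_ addr0.
pose jm := Ordinal lt_md; pose t := c jm; pose N := (Num.truncn t).+1.
have N_gt0 : (0 : R) < N%:R by rewrite ltr0n.
pose U := [multinom (if i == jm then N else 0%N) | i < d].
(* [e + c_(m+1)] lies on the segment from [e + c_m] to [e + N U_m + c_m]. *)
have le_md := ltnW lt_md.
apply: conv_eq (conv_convex (t := t / N%:R) _ (IH le_md e Ie) (IH le_md _ (I_up U Ie))) _
  => [|j].
  by rewrite divr_ge0 ?c_ge0 ?ler0n //= ler_pdivrMr // mul1r ltW ?truncnS_gt.
rewrite /embed /c_ mnmDE mnmE natrD.
have -> : (j < m.+1)%N = (j == jm) || (j < m)%N by rewrite ltnS leq_eqVlt.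
case: eqP => [->|_] /=; last by rewrite addr0; ring.
by rewrite ltnn /t; field; rewrite lt0r_neq0.
Qed.

Lemma NP_addr (p c : pt d R) : (forall j, 0 <= c j) -> NP I p ->
  NP I (fun j => p j + c j).
Proof. by move=> c_ge0; apply: conv_translate => _ [a [Ia ->]]; apply: NP_vertex_addr. Qed.

Lemma scale_NP_le (r : R) (x y : pt d R) : 0 < r -> scale r (NP I) x ->
  (forall j, x j <= y j) -> scale r (NP I) y.
Proof.
move=> r_gt0 [q NPq Ex] le_xy; exists (fun j => q j + (y j / r - q j)).
  by apply: NP_addr NPq => j; rewrite subr_ge0 ler_pdivlMr // mulrC -Ex.
by move=> j; rewrite addrC subrK mulrC divfK // gt_eqF.
Qed.

Lemma scale_NP_split (r : R) a : 0 <= r -> scale r (NP I) (embed R a) ->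
  exists b u, (scale r (NP I) (embed R b) /\ hype I r (embed R b)) /\ a = (b + u)%MM.
Proof.
move=> r_ge0 [p NPp Ea].
have [q npq le_qp] := NP_above_np NPp.
have rq_np : scale r (np I) (fun j => r * q j) by exists q.
pose b := [multinom `|Num.ceil (r * q j)|%N | j < d].
have Eb j : embed R b j = (Num.ceil (r * q j))%:~R.
  rewrite /embed mnmE natr_absz ger0_norm // ceil_ge0.
  by rewrite (lt_le_trans (ltrN10 R)) // mulr_ge0 // np_ge0.
have le_ba : (b <= a)%MM.
  apply/mnm_lepP => j; rewrite -(ler_nat R) -[(b j)%:R]/(embed R b j) Eb pmulrn.
  by rewrite ler_int ceil_le_int -pmulrn -[_%:R]/(embed R a j) Ea ler_wpM2l.
exists b, (a - b)%MM; split; last by rewrite addmC submK.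
split; last by move=> i; rewrite Eb; apply: Sset_ceil_scale_np rq_np i.
move: r_ge0 rq_np; rewrite le_eqVlt => /orP[/eqP r0 | r_gt0] rq_np.
  by exists p => // j; rewrite Eb -r0 !mul0r ceil0.
have rq_NP : scale r (NP I) (fun j => r * q j) by exists q => //; apply: np_sub_NP.
by apply: scale_NP_le r_gt0 rq_NP _ => j; rewrite Eb ceil_ge.
Qed.

End UpwardClosed.

End NewtonPolyhedron.

Theorem lemma4p4 (K : fieldType) (d : nat) (R : realType)
  (I : {mpoly K[d]} -> Prop) (r : R) :
  is_monomial_ideal I -> 0 <= r ->
  (forall p : pt d R, scale r (np I) p ->
     Sset I r (fun j => Num.ceil (p j))) /\
  (forall f : {mpoly K[d]},
     intclos_pow I r f <->
     monomial_span (fun a => scale r (NP I) (embed R a) /\ hype I r (embed R a)) f).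
Proof.
move=> monoI r_ge0; split => [p|f]; first exact: Sset_ceil_scale_np.
split; last by apply: monomial_span_mono => a [].
apply: monomial_span_refine => a; apply: scale_NP_split r_ge0 => e u.
exact: monomial_ideal_mulX.
Qed.
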